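(* Let $F_W: V^n \to \mathbb{R}^{|V|}$ be a transformer with end-to-end Lipschitz constant $\Lambda(W)$, token embedding $E$, and $C_E = \max_{t,t' \in V}\|E(t)-E(t')\|$. Let $e = (n^*, f, \phi, \tau^*, \varepsilon_{\mathrm{fit}})$ be a parametrized expert, i.e. $n^* \in V^n$, $\phi: V^* \to \mathbb{R}^k$, $f: \mathbb{R}^k \to \mathbb{R}^{|V|}$, $\tau^*>0$, and $\|F_W(n^* ) - f(\phi(n^* ))\| \le \varepsilon_{\mathrm{fit}}$. Assume $\phi$ extracts the parameter vector at the divergence embedding, so that $\|\phi(x) - \phi(n^* )\| \le C_E$ for every input $x$, and that $f$ is Lipschitz with $\mathrm{Lip}(f) \le \Lambda(W)$. Then for every input $x \in V^n$, \[ \|F_W(x) - f(\phi(x))\| \le \varepsilon_{\mathrm{fit}} + 2\Lambda(W) C_E . \] In particular, if $\delta > \varepsilon_{\mathrm{fit}} + 2\Lambda(W) C_E$, then $\|F_W(x) - f(\phi(x))\| \le \delta$ for every input $x$, with no restriction on the trie distance $d_{\mathcal T}(x,n^* )$.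
   Context: $V$ is a finite vocabulary, $P_{\mathcal M}$ a generative model over $V^*$, and the trie metric is $d_{\mathcal T}(s,s') = -\log_2 P_{\mathcal M}(s \wedge s')$ where $s\wedge s'$ is the longest common prefix. $F_W$ is a pre-norm transformer with embedding $E$; $\Lambda(W) = \prod_{\ell=1}^L \kappa^{(\ell)}$ where $\kappa^{(\ell)} = (1 + L_{\mathrm{attn}}^{(\ell)}\gamma^{(\ell)}/\varepsilon_{\mathrm{LN}})(1 + \|W_{\mathrm{MLP}}^{(\ell)}\|_{\mathrm{op}}\gamma^{(\ell)}/\varepsilon_{\mathrm{LN}})$, $L_{\mathrm{attn}}^{(\ell)} = \|W_V^{(\ell)}\|_{\mathrm{op}} + \frac{1}{2\sqrt{d_{\mathrm{head}}}}\|W_Q^{(\ell)}\|_{\mathrm{op}}\|W_K^{(\ell)}\|_{\mathrm{op}}\max_j\|\mathbf v_j\|$ (LayerNorm scale $\gamma^{(\ell)}$, stability constant $\varepsilon_{\mathrm{LN}}$, MLP norm including activation Lipschitz constants). This constant satisfies: for any $s,s'\in V^n$ first differing at position $\bar d+1$, $\|F_W(s)-F_W(s')\| \le \Lambda(W)\|E(s_{\bar d+1}) - E(s'_{\bar d+1})\|$. *)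

From HB Require Import structures.
From mathcomp Require Import all_boot all_order all_algebra.
From mathcomp Require Import reals.
Set Implicit Arguments. Unset Strict Implicit. Unset Printing Implicit Defensive.
Import Order.TTheory GRing.Theory Num.Theory.
Local Open Scope ring_scope.

Definition enorm (R : realType) (m : nat) (v : 'rV[R]_m) : R :=
  Num.sqrt (\sum_(i < m) (v ord0 i) ^+ 2).

Definition embDiam (R : realType) (V : finType) (d : nat) (E : V -> 'rV[R]_d) : R :=
  \big[Num.max/0]_(t : V) \big[Num.max/0]_(t' : V) enorm (E t - E t').

Definition divergence_lipschitz (R : realType) (V : finType) (n d : nat)
  (F : n.-tuple V -> 'rV[R]_#|V|) (E : V -> 'rV[R]_d) (Lam : R) : Prop :=
  forall (s s' : n.-tuple V) (j : 'I_n),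
    (forall i : 'I_n, (i < j)%N -> tnth s i = tnth s' i) ->
    tnth s j != tnth s' j ->
    enorm (F s - F s') <= Lam * enorm (E (tnth s j) - E (tnth s' j)).

(* Compare F x with f (phi x) through the anchor nstar.  The inputs x and
   nstar first differ at some position, where their tokens' embeddings are
   at most C_E apart, so ||F x - F nstar|| <= Lam C_E; the expert fits F at
   nstar up to eps_fit; and ||f (phi nstar) - f (phi x)|| <= Lam C_E by the
   Lipschitz bound on f and ||phi x - phi nstar|| <= C_E.  The triangle
   inequality adds the three bounds; for the Euclidean norm it comes from
   Cauchy-Schwarz, itself a consequence of Lagrange's identity. *)
From HB Require Import structures.
From mathcomp Require Import all_boot all_order all_algebra.
From mathcomp Require Import reals.
From mathcomp Require Import ring lra.
Import Order.TTheory GRing.Theory Num.Theory.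
Local Open Scope ring_scope.

Lemma lagrange_identity (R : comPzRingType) (m : nat) (u v : 'I_m -> R) :
  \sum_i \sum_j (u i * v j - u j * v i) ^+ 2 =
  2 * ((\sum_i u i ^+ 2) * (\sum_i v i ^+ 2) - (\sum_i u i * v i) ^+ 2).
Proof.
have expand i j : (u i * v j - u j * v i) ^+ 2 =
    u i ^+ 2 * v j ^+ 2 + u j ^+ 2 * v i ^+ 2 - 2 * (u i * v i * (u j * v j)).
  by ring.
under eq_bigr do under eq_bigr do rewrite expand.
under eq_bigr do rewrite sumrB big_split /=.
rewrite sumrB big_split /= [in X in _ + X - _]exchange_big /=.
have sum_prod (a b : 'I_m -> R) :
    \sum_i \sum_j a i * b j = (\sum_i a i) * (\sum_i b i).
  by rewrite mulr_suml; apply: eq_bigr => i _; rewrite mulr_sumr.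
rewrite !sum_prod.
under eq_bigr do rewrite -mulr_sumr.
by rewrite -mulr_sumr sum_prod -expr2; ring.
Qed.

Lemma cauchy_schwarz (R : realDomainType) (m : nat) (u v : 'I_m -> R) :
  (\sum_i u i * v i) ^+ 2 <= (\sum_i u i ^+ 2) * (\sum_i v i ^+ 2).
Proof.
have : 0 <= \sum_i \sum_j (u i * v j - u j * v i) ^+ 2.
  by apply: sumr_ge0 => i _; apply: sumr_ge0 => j _; exact: sqr_ge0.
by rewrite lagrange_identity pmulr_rge0 // subr_ge0.
Qed.

Section EuclideanNorm.
Context {R : realType} {m : nat}.
Implicit Types u v w z : 'rV[R]_m.

Lemma enorm_ge0 v : 0 <= enorm v.
Proof. exact: sqrtr_ge0. Qed.

Lemma enorm_sqr v : enorm v ^+ 2 = \sum_i v ord0 i ^+ 2.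
Proof. by rewrite sqr_sqrtr // sumr_ge0 // => i _; exact: sqr_ge0. Qed.

Lemma enorm0 : enorm (0 : 'rV[R]_m) = 0.
Proof. by rewrite /enorm big1 ?sqrtr0 // => i _; rewrite mxE expr0n. Qed.

Lemma enormN v : enorm (- v) = enorm v.
Proof. by rewrite /enorm; under eq_bigr do rewrite mxE sqrrN. Qed.

Lemma enormC u v : enorm (u - v) = enorm (v - u).
Proof. by rewrite -enormN opprB. Qed.

Lemma enormD_sqr u v :
  enorm (u + v) ^+ 2 =
  enorm u ^+ 2 + enorm v ^+ 2 + 2 * \sum_i u ord0 i * v ord0 i.
Proof.
rewrite !enorm_sqr mulr_sumr -!big_split /=.
by apply: eq_bigr => i _; rewrite mxE; ring.
Qed.

Lemma dot_le_enorm u v : \sum_i u ord0 i * v ord0 i <= enorm u * enorm v.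
Proof.
have sqr_sum_ge0 w : 0 <= \sum_i w ord0 i ^+ 2 :> R.
  by apply: sumr_ge0 => i _; exact: sqr_ge0.
apply: le_trans (ler_norm _) _.
rewrite -sqrtr_sqr -sqrtrM // ler_sqrt ?mulr_ge0 //.
exact: cauchy_schwarz.
Qed.

Lemma enormD u v : enorm (u + v) <= enorm u + enorm v.
Proof.
rewrite -(ler_pXn2r (n := 2)) ?nnegrE ?addr_ge0 ?enorm_ge0 //.
rewrite enormD_sqr sqrrD.
by have := dot_le_enorm u v; lra.
Qed.

Lemma enormB_le3 u v w z :
  enorm (u - z) <= enorm (u - v) + enorm (v - w) + enorm (w - z).
Proof.
have -> : u - z = (u - v) + (v - w) + (w - z) by rewrite !addrA !subrK.
by apply: le_trans (enormD _ _) _; rewrite lerD ?enormD.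
Qed.

End EuclideanNorm.

Section EmbeddingDiameter.
Context {R : realType} {V : finType} {d : nat}.
Variable E : V -> 'rV[R]_d.

Lemma embDiam_ge0 : 0 <= embDiam E.
Proof. exact: bigmax_ge_id. Qed.

Lemma enorm_le_embDiam t t' : enorm (E t - E t') <= embDiam E.
Proof.
apply: le_trans (le_bigmax _ _ t); exact: (le_bigmax _ (fun t' => enorm _) t').
Qed.

End EmbeddingDiameter.

Lemma tuple_first_diff (T : eqType) n (s s' : n.-tuple T) : s != s' ->
  exists2 j : 'I_n,
    (forall i : 'I_n, (i < j)%N -> tnth s i = tnth s' i) & tnth s j != tnth s' j.
Proof.
move=> neq_ss'.
have [j0 diff_j0] : exists j0 : 'I_n, tnth s j0 != tnth s' j0.
  apply/existsP; apply: contraR neq_ss' => /existsPn same.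
  by apply/eqP/eq_from_tnth => i; apply/eqP/negPn/same.
case: (@arg_minnP _ j0 (fun j => tnth s j != tnth s' j) val diff_j0)
  => j diff_j min_j.
exists j => // i lt_ij; apply/eqP; apply: contraTT lt_ij => diff_i.
by rewrite -leqNgt min_j.
Qed.

Lemma divergence_lipschitz_le {R : realType} {V : finType} {n d : nat}
    {F : n.-tuple V -> 'rV[R]_#|V|} {E : V -> 'rV[R]_d} {Lam : R} :
  0 <= Lam -> divergence_lipschitz F E Lam ->
  forall s s', enorm (F s - F s') <= Lam * embDiam E.
Proof.
move=> Lam_ge0 FLip s s'; have [<-|/tuple_first_diff[j same diff_j]] := eqVneq s s'.
  by rewrite subrr enorm0 mulr_ge0 ?embDiam_ge0.
by apply: le_trans (FLip s s' j same diff_j) _; rewrite ler_wpM2l ?enorm_le_embDiam.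
Qed.

Theorem mainTheorem2
  (R : realType) (V : finType) (n d k : nat)
  (F : n.-tuple V -> 'rV[R]_#|V|) (E : V -> 'rV[R]_d) (Lam : R)
  (hLam0 : 0 <= Lam)
  (hLam : divergence_lipschitz F E Lam)
  (nstar : n.-tuple V) (f : 'rV[R]_k -> 'rV[R]_#|V|) (phi : seq V -> 'rV[R]_k)
  (taustar eps_fit : R)
  (htau : 0 < taustar)
  (hfit : enorm (F nstar - f (phi nstar)) <= eps_fit)
  (hphi : forall x : n.-tuple V, enorm (phi x - phi nstar) <= embDiam E)
  (hf : forall a b : 'rV[R]_k, enorm (f a - f b) <= Lam * enorm (a - b)) :
  (forall x : n.-tuple V,
     enorm (F x - f (phi x)) <= eps_fit + 2 * Lam * embDiam E) /\
  (forall delta : R, eps_fit + 2 * Lam * embDiam E < delta ->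
     forall x : n.-tuple V, enorm (F x - f (phi x)) <= delta).
Proof.
have bound x : enorm (F x - f (phi x)) <= eps_fit + 2 * Lam * embDiam E.
  apply: le_trans (enormB_le3 (F x) (F nstar) (f (phi nstar)) (f (phi x))) _.
  have anchor := divergence_lipschitz_le hLam0 hLam x nstar.
  have expert : enorm (f (phi nstar) - f (phi x)) <= Lam * embDiam E.
    by apply: le_trans (hf _ _) _; rewrite ler_wpM2l // enormC.
  lra.
by split=> // delta /ltW le_delta x; apply: le_trans (bound x) le_delta.
Qed.
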